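(* Let $L$ be an $S$-Noetherian lattice, where $S$ is a multiplicatively closed subset of $L$ with $1\in S$, $0\notin S$. Then every $S$-irreducible element of $L$ is $S$-primary.
   Context: A multiplicative lattice is a complete lattice with a commutative, associative multiplication distributing over arbitrary joins, with $1$ as identity; $L_*$ is the set of compact elements; $(a:b)=\bigvee\{x\mid xb\le a\}$. An element $m$ is meet principal if $a\wedge mb=m((a:m)\wedge b)$ for all $a,b$, join principal if $a\vee(b:m)=(am\vee b):m$ for all $a,b$, and principal if both. An $r$-lattice is a modular, principally generated, compactly generated multiplicative lattice with $1$ compact. A multiplicatively closed subset is a nonempty $S\subseteq L_*$ closed under multiplication. An element $a$ is $S$-compact if $sa\le b\le a$ for some compact $b$ and some $s\in S$; an $S$-Noetherian lattice is an $r$-lattice in which every element is $S$-compact. $\sqrt a=\bigvee\{x\in L_*\mid x^n\le a\text{ for some }n\in\mathbb{Z}^+\}$. An element $q$ with $t\not\le q$ for all $t\in S$ is $S$-irreducible if whenever $s(a\wedge b)\le q\le a\wedge b$ for some $s\in S$ and $a,b\in L$, there exists $s'\in S$ with $ss'a\le q$ or $ss'b\le q$. A proper element $q$ with $t\not\le q$ for all $t\in S$ is $S$-primary if there exists $s\in S$ such that for all $c,d\in L$, $cd\le q$ implies $sc\le q$ or $sd\le\sqrt q$. *)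

From Stdlib Require Import List Arith.

Record MultLattice := {
  car :> Type;
  le : car -> car -> Prop;
  sup : (car -> Prop) -> car;
  mul : car -> car -> car;
  one : car;
  le_refl : forall a, le a a;
  le_trans : forall a b c, le a b -> le b c -> le a c;
  le_antisym : forall a b, le a b -> le b a -> a = b;
  sup_ub : forall (A : car -> Prop) a, A a -> le a (sup A);
  sup_least : forall (A : car -> Prop) b, (forall a, A a -> le a b) -> le (sup A) b;
  mul_comm : forall a b, mul a b = mul b a;
  mul_assoc : forall a b c, mul a (mul b c) = mul (mul a b) c;
  mul_sup : forall a (A : car -> Prop),
      mul a (sup A) = sup (fun x => exists y, A y /\ x = mul a y);
  one_mul : forall a, mul one a = a;
  one_top : forall a, le a one
}.

Section Defs.
Variable L : MultLattice.

Definition bot : L := sup L (fun _ => False).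
Definition join (a b : L) : L := sup L (fun x => x = a \/ x = b).
Definition meet (a b : L) : L := sup L (fun x => le L x a /\ le L x b).
Definition colon (a b : L) : L := sup L (fun x => le L (mul L x b) a).

Fixpoint pw (x : L) (n : nat) : L :=
  match n with 0 => one L | S k => mul L x (pw x k) end.

Definition compact (c : L) : Prop :=
  forall A : L -> Prop, le L c (sup L A) ->
    exists l : list L, (forall x, In x l -> A x) /\ le L c (sup L (fun x => In x l)).

Definition meet_principal (m : L) : Prop :=
  forall a b, meet a (mul L m b) = mul L m (meet (colon a m) b).
Definition join_principal (m : L) : Prop :=
  forall a b, join a (colon b m) = colon (join (mul L a m) b) m.
Definition principal (m : L) : Prop := meet_principal m /\ join_principal m.

Definition modular : Prop :=
  forall a b c, le L a c -> join a (meet b c) = meet (join a b) c.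
Definition principally_generated : Prop :=
  forall a, a = sup L (fun x => principal x /\ le L x a).
Definition compactly_generated : Prop :=
  forall a, a = sup L (fun x => compact x /\ le L x a).

Definition r_lattice : Prop :=
  modular /\ principally_generated /\ compactly_generated /\ compact (one L).

Definition mult_closed (S : L -> Prop) : Prop :=
  (exists s, S s) /\ (forall s, S s -> compact s) /\
  (forall s t, S s -> S t -> S (mul L s t)).

Definition S_compact (S : L -> Prop) (a : L) : Prop :=
  exists s b, S s /\ compact b /\ le L (mul L s a) b /\ le L b a.

Definition S_noetherian (S : L -> Prop) : Prop :=
  r_lattice /\ forall a, S_compact S a.

Definition rad (a : L) : L :=
  sup L (fun x => compact x /\ exists n, 0 < n /\ le L (pw x n) a).

Definition S_irreducible (S : L -> Prop) (q : L) : Prop :=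
  (forall t, S t -> ~ le L t q) /\
  forall s a b, S s -> le L (mul L s (meet a b)) q -> le L q (meet a b) ->
    exists s', S s' /\ (le L (mul L (mul L s s') a) q \/ le L (mul L (mul L s s') b) q).

Definition S_primary (S : L -> Prop) (q : L) : Prop :=
  q <> one L /\ (forall t, S t -> ~ le L t q) /\
  exists s, S s /\ forall c d, le L (mul L c d) q ->
    le L (mul L s c) q \/ le L (mul L s d) (rad q).

End Defs.

(* Two applications of S-compactness make the "exists s'" in S-irreducibility
   uniform.  The join of all residuals (q : t), t in S, is S-compact, which
   yields a single u in S with (q : t) <= (q : u) for every t in S.  For a
   principal d the residuals (q : d^n) stabilise up to a factor s in S at some
   exponent k; with D = d^(k+1), meet principality of D gives
   s (D ⊓ (q : D)) <= q, and modularity rewrites q ⊔ (D ⊓ (q : D)) as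
   (q ⊔ D) ⊓ (q : D).  S-irreducibility of q at this meet gives either u D <= q,
   so (u d)^(k+1) <= q, or u (q : D) <= q, so u c <= q whenever c d <= q.
   As L is principally generated, the dichotomy extends from principal d to
   all d, and u witnesses that q is S-primary. *)

From Pilot Require Import Defs.
From Stdlib Require Import List Arith Classical Lia.

Section MultLatticeFacts.
Variable L : MultLattice.

Local Infix "≤" := (le L) (at level 70, no associativity).
Local Infix "·" := (mul L) (at level 40, left associativity).
Local Infix "⊔" := (join L) (at level 50, left associativity).
Local Infix "⊓" := (meet L) (at level 45, left associativity).
Local Notation colon := (colon L).
Local Notation pw := (pw L).
Local Notation rad := (rad L).
Local Notation one := (one L).

Lemma le_eq_lower (a b : L) : (forall x, x ≤ a <-> x ≤ b) -> a = b.
Proof. intros H; apply le_antisym; apply H; apply le_refl. Qed.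

Lemma mul_one_r (a : L) : a · one = a.
Proof. rewrite mul_comm; apply one_mul. Qed.

Lemma join_ub_l (a b : L) : a ≤ a ⊔ b.
Proof. unfold join; apply sup_ub; auto. Qed.

Lemma join_ub_r (a b : L) : b ≤ a ⊔ b.
Proof. unfold join; apply sup_ub; auto. Qed.

Lemma join_lub (a b c : L) : a ≤ c -> b ≤ c -> a ⊔ b ≤ c.
Proof. intros; unfold join; apply sup_least; intros x [-> | ->]; auto. Qed.

Lemma meet_lb_l (a b : L) : a ⊓ b ≤ a.
Proof. unfold meet; apply sup_least; intros x [H _]; auto. Qed.

Lemma meet_lb_r (a b : L) : a ⊓ b ≤ b.
Proof. unfold meet; apply sup_least; intros x [_ H]; auto. Qed.

Lemma meet_glb (a b c : L) : c ≤ a -> c ≤ b -> c ≤ a ⊓ b.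
Proof. intros; unfold meet; apply sup_ub; auto. Qed.

Lemma meet_comm (a b : L) : a ⊓ b = b ⊓ a.
Proof.
  apply le_eq_lower; intro x; split; intro H; apply meet_glb;
    eapply le_trans; eauto using meet_lb_l, meet_lb_r.
Qed.

Lemma meet_one_r (a : L) : a ⊓ one = a.
Proof.
  apply le_antisym; [apply meet_lb_l | apply meet_glb; [apply le_refl | apply one_top]].
Qed.

Lemma mul_mono_r (c a b : L) : a ≤ b -> c · a ≤ c · b.
Proof.
  intros Hab.
  assert (Hb : b = a ⊔ b)
    by (apply le_antisym; [apply join_ub_r | apply join_lub; auto; apply le_refl]).
  rewrite Hb; unfold join; rewrite mul_sup.
  apply sup_ub; exists a; auto.
Qed.

Lemma mul_mono_l (c a b : L) : a ≤ b -> a · c ≤ b · c.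
Proof. intros; rewrite !(mul_comm L _ c); apply mul_mono_r; auto. Qed.

Lemma mul_le_l (a b : L) : a · b ≤ a.
Proof.
  eapply le_trans; [apply mul_mono_r, one_top | rewrite mul_one_r; apply le_refl].
Qed.

Lemma mul_le_r (a b : L) : a · b ≤ b.
Proof. rewrite mul_comm; apply mul_le_l. Qed.

Lemma mul_join_lub (s a b c : L) : s · a ≤ c -> s · b ≤ c -> s · (a ⊔ b) ≤ c.
Proof.
  intros; unfold join; rewrite mul_sup; apply sup_least.
  intros z [y [[-> | ->] ->]]; auto.
Qed.

Lemma colon_spec (a b x : L) : x ≤ colon a b <-> x · b ≤ a.
Proof.
  split; intro H.
  - eapply le_trans; [apply mul_mono_l, H |].
    unfold Defs.colon; rewrite mul_comm, mul_sup; apply sup_least.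
    intros z [y [Hy ->]]; rewrite mul_comm; auto.
  - unfold Defs.colon; apply sup_ub; auto.
Qed.

Lemma mul_colon_le (a b : L) : colon a b · b ≤ a.
Proof. apply colon_spec, le_refl. Qed.

Lemma le_colon_mul (a b : L) : a ≤ colon a b.
Proof. apply colon_spec, mul_le_l. Qed.

Lemma colon_anti (a b b' : L) : b' ≤ b -> colon a b ≤ colon a b'.
Proof.
  intro; apply colon_spec.
  eapply le_trans; [apply mul_mono_r; eauto | apply mul_colon_le].
Qed.

Lemma colon_colon (a m n : L) : colon (colon a m) n = colon a (m · n).
Proof.
  apply le_eq_lower; intro x; rewrite !colon_spec.
  rewrite (mul_comm L m n), mul_assoc; tauto.
Qed.

Lemma meet_principal_one : meet_principal L one.
Proof.
  intros a b; rewrite !one_mul; f_equal.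
  apply le_eq_lower; intro x; rewrite colon_spec, mul_one_r; tauto.
Qed.

Lemma meet_principal_mul (m n : L) :
  meet_principal L m -> meet_principal L n -> meet_principal L (m · n).
Proof.
  intros Hm Hn a b.
  rewrite <- mul_assoc, Hm, Hn, mul_assoc, colon_colon; reflexivity.
Qed.

Lemma meet_principal_meet_colon (a m : L) :
  meet_principal L m -> m ⊓ colon a m = m · colon a (m · m).
Proof.
  intro Hm.
  pose proof (Hm (colon a m) one) as E.
  rewrite mul_one_r, meet_one_r, colon_colon in E.
  rewrite meet_comm; exact E.
Qed.

Lemma pw_add (d : L) m n : pw d (m + n) = pw d m · pw d n.
Proof. induction m; simpl; [rewrite one_mul | rewrite IHm, mul_assoc]; auto. Qed.

Lemma pw_anti (d : L) m n : m <= n -> pw d n ≤ pw d m.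
Proof.
  intro; replace n with (m + (n - m)) by lia.
  rewrite pw_add; apply mul_le_l.
Qed.

Lemma pw_mono (a b : L) n : a ≤ b -> pw a n ≤ pw b n.
Proof.
  intro; induction n; simpl; [apply le_refl |].
  eapply le_trans; [apply mul_mono_l | apply mul_mono_r]; eauto.
Qed.

Lemma pw_mul (a b : L) n : pw (a · b) n = pw a n · pw b n.
Proof.
  induction n; simpl; [rewrite one_mul; auto |].
  rewrite IHn, <- !mul_assoc; f_equal.
  rewrite !mul_assoc, (mul_comm L b (pw a n)); reflexivity.
Qed.

Lemma pw_meet_principal (d : L) n :
  meet_principal L d -> meet_principal L (pw d n).
Proof.
  intro Hd; induction n; simpl;
    [apply meet_principal_one | apply meet_principal_mul; auto].
Qed.

Lemma le_rad (a q : L) n :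
  compactly_generated L -> 0 < n -> pw a n ≤ q -> a ≤ rad q.
Proof.
  intros Hcg Hn Han.
  rewrite (Hcg a); apply sup_least; intros x [Hx Hxa].
  apply sup_ub; split; auto.
  exists n; split; auto.
  eapply le_trans; [apply pw_mono, Hxa | exact Han].
Qed.

Lemma compact_le_directed_sup {I : Type} (P : I -> Prop) (F : I -> L) (i0 : I) (b : L) :
  P i0 ->
  (forall i j, P i -> P j -> exists k, P k /\ F i ≤ F k /\ F j ≤ F k) ->
  compact L b -> b ≤ sup L (fun x => exists i, P i /\ x = F i) ->
  exists k, P k /\ b ≤ F k.
Proof.
  intros Hi0 Hdir Hb Hle.
  destruct (Hb _ Hle) as [l [Hl Hbl]].
  assert (Hub : exists k, P k /\ forall x, In x l -> x ≤ F k).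
  { clear Hbl; induction l as [|y l IH].
    - exists i0; split; auto; intros x [].
    - destruct IH as [k [Pk Hk]]; [intros; apply Hl; right; auto |].
      destruct (Hl y (or_introl eq_refl)) as [j [Pj ->]].
      destruct (Hdir k j Pk Pj) as [m [Pm [Hkm Hjm]]].
      exists m; split; auto.
      intros x [<- | Hx]; auto; eapply le_trans; eauto. }
  destruct Hub as [k [Pk Hk]].
  exists k; split; auto.
  eapply le_trans; [exact Hbl | apply sup_least; auto].
Qed.

End MultLatticeFacts.

Section SNoetherian.
Variable L : MultLattice.
Variable S : L -> Prop.
Hypothesis S_nonempty : exists s, S s.
Hypothesis S_mul : forall s t, S s -> S t -> S (mul L s t).
Hypothesis all_S_compact : forall a, S_compact L S a.
Hypothesis L_modular : modular L.
Hypothesis L_compactly_generated : compactly_generated L.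

Local Infix "≤" := (le L) (at level 70, no associativity).
Local Infix "·" := (mul L) (at level 40, left associativity).
Local Infix "⊔" := (join L) (at level 50, left associativity).
Local Infix "⊓" := (meet L) (at level 45, left associativity).
Local Notation colon := (colon L).
Local Notation pw := (pw L).
Local Notation rad := (rad L).

Lemma colon_S_uniform (q : L) :
  exists u, S u /\ forall t, S t -> colon q t ≤ colon q u.
Proof.
  destruct S_nonempty as [s0 Hs0].
  destruct (all_S_compact (sup L (fun x => exists t, S t /\ x = colon q t)))
    as [s [b [Hs [Hb [Hsb Hbsup]]]]].
  destruct (compact_le_directed_sup L S (colon q) s0 b Hs0) as [T [HT HbT]]; auto.
  { intros i j Hi Hj; exists (i · j); split; auto.
    split; apply colon_anti; [apply mul_le_l | apply mul_le_r]. }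
  exists (s · T); split; auto.
  intros t Ht; apply colon_spec.
  rewrite mul_assoc, (mul_comm L _ s); apply colon_spec.
  eapply le_trans; [| exact HbT]; eapply le_trans; [| exact Hsb].
  apply mul_mono_r, sup_ub; eauto.
Qed.

Lemma colon_pw_S_stable (q d : L) :
  exists s k, S s /\ forall n, s · colon q (pw d n) ≤ colon q (pw d k).
Proof.
  destruct (all_S_compact (sup L (fun x => exists n, True /\ x = colon q (pw d n))))
    as [s [b [Hs [Hb [Hsb Hbsup]]]]].
  destruct (compact_le_directed_sup L (fun _ => True) (fun n => colon q (pw d n)) 0 b I)
    as [k [_ Hk]]; auto.
  { intros i j _ _; exists (max i j).
    split; auto; split; apply colon_anti, pw_anti; lia. }
  exists s, k; split; auto; intro n.
  eapply le_trans; [| exact Hk]; eapply le_trans; [| exact Hsb].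
  apply mul_mono_r, sup_ub; eauto.
Qed.

Lemma S_irreducible_uniform (q u : L) :
  S_irreducible L S q -> (forall t, S t -> colon q t ≤ colon q u) ->
  forall s a b, S s -> s · (a ⊓ b) ≤ q -> q ≤ a ⊓ b -> u · a ≤ q \/ u · b ≤ q.
Proof.
  intros [_ Hirr] Hu s a b Hs Hsab Hqab.
  destruct (Hirr s a b Hs Hsab Hqab) as [s' [Hs' Hx]].
  assert (Hss' : forall x, s · s' · x ≤ q -> u · x ≤ q).
  { intros x Hx'; rewrite mul_comm; apply colon_spec.
    eapply le_trans; [| apply (Hu (s · s')); auto].
    apply colon_spec; rewrite mul_comm; exact Hx'. }
  destruct Hx; [left | right]; auto.
Qed.

Lemma principal_dichotomy (q u c d : L) :
  S_irreducible L S q -> (forall t, S t -> colon q t ≤ colon q u) ->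
  meet_principal L d -> c · d ≤ q -> u · c ≤ q \/ u · d ≤ rad q.
Proof.
  intros Hirr Hu Hd Hcd.
  destruct (colon_pw_S_stable q d) as [s [k [Hs Hstable]]].
  set (D := pw d (1 + k)).
  assert (HsD : s · (D ⊓ colon q D) ≤ q).
  { rewrite meet_principal_meet_colon by apply pw_meet_principal, Hd.
    rewrite mul_assoc, (mul_comm L s D), <- mul_assoc.
    eapply le_trans; [apply mul_mono_r | rewrite mul_comm; apply mul_colon_le].
    unfold D; rewrite <- pw_add.
    eapply le_trans; [apply Hstable | apply colon_anti, pw_anti; lia]. }
  assert (Hsplit : s · ((q ⊔ D) ⊓ colon q D) ≤ q).
  { rewrite <- L_modular by apply le_colon_mul.
    apply mul_join_lub; [apply mul_le_r | exact HsD]. }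
  assert (Hq : q ≤ (q ⊔ D) ⊓ colon q D)
    by (apply meet_glb; [apply join_ub_l | apply le_colon_mul]).
  destruct (S_irreducible_uniform q u Hirr Hu s _ _ Hs Hsplit Hq) as [HuD | HuC].
  - right; apply (le_rad L _ _ (1 + k)); auto; [lia |].
    rewrite pw_mul; eapply le_trans; [apply mul_mono_l, mul_le_l |].
    eapply le_trans; [apply mul_mono_r, join_ub_r | exact HuD].
  - left; eapply le_trans; [apply mul_mono_r | exact HuC].
    apply colon_spec; eapply le_trans; [apply mul_mono_r, mul_le_l | exact Hcd].
Qed.

End SNoetherian.

Theorem mainTheorem6 (L : MultLattice) (S : L -> Prop) :
  mult_closed L S -> S (one L) -> ~ S (bot L) ->
  S_noetherian L S ->
  forall q : L, S_irreducible L S q -> S_primary L S q.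
Proof.
  intros [S_nonempty [_ S_mul]] S_one _ [[Hmod [Hpg [Hcg _]]] Hcpt] q Hirr.
  destruct (colon_S_uniform L S S_nonempty S_mul Hcpt q) as [u [Hu Huni]].
  split; [| split; [apply Hirr |]].
  { intro Hq1; apply (proj1 Hirr (one L) S_one); rewrite Hq1; apply le_refl. }
  exists u; split; auto.
  intros c d Hcd.
  destruct (classic (le L (mul L u c) q)) as [Huc | Huc]; [left; exact Huc | right].
  rewrite (Hpg d), mul_sup; apply sup_least.
  intros z [y [[[Hy _] Hyd] ->]].
  assert (Hcy : le L (mul L c y) q)
    by (eapply le_trans; [apply mul_mono_r, Hyd | exact Hcd]).
  destruct (principal_dichotomy L S S_mul Hcpt Hmod Hcg q u c y Hirr Huni Hy Hcy)
    as [Huc' | Huy]; [contradiction | exact Huy].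
Qed.
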